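(* Let $R$ be a ring with identity and $a,b,c,p,q\in R$, and suppose there exist $p',q'\in R$ with $q'qc=c$ and $bpp'=b$. The following are equivalent: (i) $paq$ is $(b,c)$-invertible; (ii) $pa$ is right $(qb,qc)$-invertible and $aq$ is left $(bp,cp)$-invertible. Moreover, if $y$ is the $(b,c)$-inverse of $paq$, $x$ is any right $(qb,qc)$-inverse of $pa$ and $z$ is any left $(bp,cp)$-inverse of $aq$, then $y=zax$.
   Context: For $x\in R$: $xR=\{xr:r\in R\}$, $Rx=\{rx:r\in R\}$. For $\alpha,b,c\in R$: $y$ is a left $(b,c)$-inverse of $\alpha$ if $Ry\subseteq Rc$ and $y\alpha b=b$; a right $(b,c)$-inverse if $yR\subseteq bR$ and $c\alpha y=c$; $\alpha$ is left/right $(b,c)$-invertible if such $y$ exists. $\alpha$ is $(b,c)$-invertible if there is $y\in R$ with $y\in (bRy)\cap(yRc)$, $y\alpha b=b$ and $c\alpha y=c$; such $y$ is unique and called the $(b,c)$-inverse of $\alpha$. *)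

From mathcomp Require Import all_boot all_algebra.
Set Implicit Arguments. Unset Strict Implicit. Unset Printing Implicit Defensive.
Import GRing.Theory.
Local Open Scope ring_scope.

Section BC.
Variable R : pzRingType.

Definition rsub (x y : R) : Prop := forall r : R, exists s : R, x * r = y * s.
Definition lsub (x y : R) : Prop := forall r : R, exists s : R, r * x = s * y.

Definition left_bc_inverse (a b c y : R) : Prop := lsub y c /\ y * a * b = b.
Definition right_bc_inverse (a b c y : R) : Prop := rsub y b /\ c * a * y = c.

Definition left_bc_invertible (a b c : R) : Prop := exists y, left_bc_inverse a b c y.
Definition right_bc_invertible (a b c : R) : Prop := exists y, right_bc_inverse a b c y.

Definition bc_inverse (a b c y : R) : Prop :=
  (exists r, y = b * r * y) /\ (exists s, y = y * s * c) /\
  y * a * b = b /\ c * a * y = c.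

Definition bc_invertible (a b c : R) : Prop := exists y, bc_inverse a b c y.
End BC.

(** Multiplying by [q] on the left and by [p] on the right turns one-sided
    [(b, c)]-inverses of [p a q] into one-sided inverses of [p a] and [a q];
    the cancellations [q' q c = c] and [b p p' = b] let one go back.  An
    element that is both a left and a right [(b, c)]-inverse is the
    [(b, c)]-inverse, and a left and a right [(b, c)]-inverse always coincide
    ([y = y a z = z]); for factor inverses [x] and [z] the element [z a x]
    is both. *)
From mathcomp Require Import all_boot all_algebra.
Set Implicit Arguments. Unset Strict Implicit.
Local Open Scope ring_scope.
Import GRing.Theory.

Section BCInverse.
Variable R : pzRingType.
Implicit Types (a b c p q x y z : R).

Lemma rsubP x y : rsub x y <-> exists s, x = y * s.
Proof.
split=> [xRy | [s ->] r]; last by exists (s * r); rewrite mulrA.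
by have [s] := xRy 1; rewrite mulr1; exists s.
Qed.

Lemma lsubP x y : lsub x y <-> exists t, x = t * y.
Proof.
split=> [xRy | [t ->] r]; last by exists (r * t); rewrite mulrA.
by have [t] := xRy 1; rewrite mul1r; exists t.
Qed.

Lemma left_right_bc_inverse_eq a b c y z :
  left_bc_inverse a b c y -> right_bc_inverse a b c z -> y = z.
Proof.
move=> [/lsubP[t ->] yab] [/rsubP[s ->] caz].
by rewrite -{1}caz !mulrA yab.
Qed.

Lemma bc_inverse_left a b c y : bc_inverse a b c y -> left_bc_inverse a b c y.
Proof. by move=> [_ [[s ys] [yab _]]]; split=> //; apply/lsubP; exists (y * s). Qed.

Lemma bc_inverse_right a b c y : bc_inverse a b c y -> right_bc_inverse a b c y.
Proof.
by move=> [[r yr] [_ [_ cay]]]; split=> //; apply/rsubP; exists (r * y); rewrite mulrA.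
Qed.

Lemma bc_inverse_unique a b c y z : bc_inverse a b c y -> bc_inverse a b c z -> y = z.
Proof. by move=> /bc_inverse_left ly /bc_inverse_right; apply: left_right_bc_inverse_eq ly. Qed.

Lemma left_right_bc_inverse a b c y :
  left_bc_inverse a b c y -> right_bc_inverse a b c y -> bc_inverse a b c y.
Proof.
move=> [yRc yab] [yRb cay].
have yay : y * a * y = y.
  by have /rsubP[s ys] := yRb; rewrite {2}ys mulrA yab -ys.
split; last split=> //.
- have /rsubP[s ys] := yRb; exists (s * a).
  by rewrite -{1}yay {1}ys !mulrA.
- have /lsubP[t yt] := yRc; exists (a * t).
  by rewrite -{1}yay {2}yt !mulrA.
Qed.

Lemma right_bc_inverse_mulr a b c q y :
  right_bc_inverse (a * q) b c y -> right_bc_inverse a (q * b) (q * c) (q * y).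
Proof.
move=> [/rsubP[s ->] caqy]; split; first by apply/rsubP; exists s; rewrite !mulrA.
by rewrite -[in RHS]caqy !mulrA.
Qed.

Lemma left_bc_inverse_mull a b c p y :
  left_bc_inverse (p * a) b c y -> left_bc_inverse a (b * p) (c * p) (y * p).
Proof.
move=> [/lsubP[t ->] ypab]; split; first by apply/lsubP; exists t; rewrite !mulrA.
by rewrite -[in RHS]ypab !mulrA.
Qed.

Lemma right_bc_inverse_cancel a b c q q' x :
  q' * q * c = c -> right_bc_inverse a (q * b) (q * c) x -> c * a * x = c.
Proof. by move=> qc [_ /(congr1 (GRing.mul q'))]; rewrite !mulrA qc. Qed.

Lemma left_bc_inverse_cancel a b c p p' z :
  b * p * p' = b -> left_bc_inverse a (b * p) (c * p) z -> z * a * b = b.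
Proof. by move=> bp [_ /(congr1 (GRing.mul^~ p'))]; rewrite /= -!mulrA !(mulrA b) bp. Qed.

Lemma bc_inverse_of_factor_inverses a b c p q p' q' x z :
    q' * q * c = c -> b * p * p' = b ->
    right_bc_inverse (p * a) (q * b) (q * c) x ->
    left_bc_inverse (a * q) (b * p) (c * p) z ->
  bc_inverse (p * a * q) b c (z * a * x).
Proof.
move=> qc bp rx lz.
have := right_bc_inverse_cancel qc rx; rewrite mulrA => cpax.
have := left_bc_inverse_cancel bp lz; rewrite mulrA => zaqb.
have [[/rsubP[s xs] _] [/lsubP[t zt] _]] := (rx, lz).
have zax_b : z * a * x = b * s by rewrite xs !mulrA zaqb.
have zax_c : z * a * x = t * c by rewrite zt !mulrA -!(mulrA t) cpax.
apply: left_right_bc_inverse; split.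
- by apply/lsubP; exists t.
- by rewrite zax_c !mulrA -(mulrA t c p) -zt.
- by apply/rsubP; exists s.
- by rewrite zax_b -[RHS]cpax xs !mulrA.
Qed.

End BCInverse.

Theorem theorem3p6 (R : pzRingType) (a b c p q p' q' : R)
  (hq : q' * q * c = c) (hp : b * p * p' = b) :
  (bc_invertible (p * a * q) b c <->
     (right_bc_invertible (p * a) (q * b) (q * c) /\
      left_bc_invertible (a * q) (b * p) (c * p))) /\
  (forall y x z : R,
     bc_inverse (p * a * q) b c y ->
     right_bc_inverse (p * a) (q * b) (q * c) x ->
     left_bc_inverse (a * q) (b * p) (c * p) z ->
     y = z * a * x).
Proof.
split; first split.
- move=> [y hy]; split.
    by exists (q * y); apply/right_bc_inverse_mulr/bc_inverse_right.
  exists (y * p); apply: left_bc_inverse_mull.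
  by rewrite mulrA; apply: bc_inverse_left.
- move=> [[x rx] [z lz]]; exists (z * a * x).
  exact: bc_inverse_of_factor_inverses hq hp rx lz.
- move=> y x z hy rx lz; apply: bc_inverse_unique hy _.
  exact: bc_inverse_of_factor_inverses hq hp rx lz.
Qed.
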